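(* Let $G=(X,Y;E)$ be a bipartite graph with $n$ vertices and let $M\subseteq E$ be a matching of $G$. Then $M$ is a perfect matching of $G$ that is uniquely restricted if and only if the $BD$-mapping digraph $D(G,M)$ is acyclic and has exactly $n/2$ vertices.
   Context: A matching $M$ is uniquely restricted if the subgraph of $G$ induced by the vertices saturated by $M$ has a unique perfect matching (namely $M$). For each edge of $M$ write it as $(x,x')$ with $x\in X$, $x'\in Y$; $x'$ is called the partner of $x$. The $BD$-mapping digraph $D(G,M)=(V,A)$ has vertex set $V=\{x\in X : (x,x')\in M \text{ for some } x'\}$ and arc set $A=\{\langle x_1,x_2\rangle : x_1,x_2\in V,\ (x_1,x_2')\in E\setminus M\}$, where $x_2'$ is the partner of $x_2$. $|D(G,M)|$ denotes the number of vertices of $D(G,M)$. *)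

From mathcomp Require Import all_boot.
Set Implicit Arguments. Unset Strict Implicit. Unset Printing Implicit Defensive.

(* A bipartite graph G = (X, Y; E) is given by two finite vertex types X, Y
   (the two colour classes) and an edge set E of pairs (x, y), x in X, y in Y. *)

Section Bip.
Variables (X Y : finType).

Definition is_matching (M : {set X * Y}) : Prop :=
  forall e1 e2, e1 \in M -> e2 \in M ->
    (e1.1 = e2.1 \/ e1.2 = e2.2) -> e1 = e2.

Definition is_matching_of (E M : {set X * Y}) : Prop :=
  M \subset E /\ is_matching M.

Definition satX (M : {set X * Y}) : {set X} := [set x | [exists y, (x, y) \in M]].
Definition satY (M : {set X * Y}) : {set Y} := [set y | [exists x, (x, y) \in M]].

Definition perfect_matching (E M : {set X * Y}) : Prop :=
  is_matching_of E M /\ satX M = [set: X] /\ satY M = [set: Y].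

Definition perfect_matching_induced (E : {set X * Y}) (A : {set X}) (B : {set Y})
    (M' : {set X * Y}) : Prop :=
  is_matching_of E M' /\
  (forall e, e \in M' -> e.1 \in A /\ e.2 \in B) /\
  satX M' = A /\ satY M' = B.

Definition uniquely_restricted (E M : {set X * Y}) : Prop :=
  is_matching_of E M /\
  forall M', perfect_matching_induced E (satX M) (satY M) M' -> M' = M.

Definition BD_vertices (M : {set X * Y}) : {set X} := satX M.

Definition BD_arc (E M : {set X * Y}) : rel X :=
  fun x1 x2 => [&& x1 \in BD_vertices M, x2 \in BD_vertices M &
     [exists y, [&& (x2, y) \in M, (x1, y) \in E & (x1, y) \notin M]]].

(* A digraph given by a relation is acyclic: it has no directed closed walk
   (equivalently, no directed cycle). *)
Definition acyclic_digraph (r : rel X) : Prop :=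
  ~ exists (x : X) (p : seq X), p != [::] /\ path r x p /\ last x p = x.

End Bip.

(* A directed cycle x_1 -> ... -> x_k of
   D(G, M) is exactly an M-alternating cycle: replacing (x_(i+1), x_(i+1)')
   by (x_i, x_(i+1)') along it yields a second perfect matching of the
   subgraph induced by the saturated vertices.  Conversely, if M' is another
   such perfect matching, every vertex x whose M'-partner y differs from its
   M-partner has an arc to the M-partner of y, which is again such a vertex,
   so D(G, M) contains a closed walk.  Hence M is uniquely restricted iff
   D(G, M) is acyclic; and since |satX M| = |M| = |satY M|, the matching is
   perfect iff |D(G, M)| = n/2. *)

From mathcomp Require Import all_boot.
From mathcomp Require Import zify.
Set Implicit Arguments. Unset Strict Implicit. Unset Printing Implicit Defensive.

Lemma not_acyclic_of_succ_closed (T : finType) (r : rel T) (D : {set T}) x0 :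
  x0 \in D -> (forall x, x \in D -> exists2 y, y \in D & r x y) ->
  ~ acyclic_digraph r.
Proof.
(* Follow a chosen successor from x0: the orbit of x0 eventually revisits
   one of its points, and that stretch of the orbit is a closed walk. *)
move=> x0D succD []; pose f x := odflt x [pick y in D | r x y].
have fD x : x \in D -> f x \in D /\ r x (f x).
  move=> xD; rewrite /f; case: pickP => [y /andP[]//|noy].
  by have [y yD rxy] := succD x xD; move: (noy y); rewrite yD rxy.
have iter_in_D i : iter i f x0 \in D by elim: i => //= i /fD[].
have walk i m : path r (iter i f x0) (traject f (iter i.+1 f x0) m).
  elim: m i => //= m IHm i.
  by rewrite (fD _ (iter_in_D i)).2; exact: (IHm i.+1).
have /trajectP[i lt_i_n eq_i] := looping_order f x0.
exists (iter i f x0), (traject f (iter i.+1 f x0) (order f x0 - i)).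
split; [|split=> //].
- by case: (order f x0 - i) (subn_gt0 i (order f x0)); rewrite ?lt_i_n.
- by rewrite last_traject -iterD subnK ?(ltnW lt_i_n).
Qed.

Lemma uniq_cycle_of_closed_walk (T : eqType) (r : rel T) x p :
  p != [::] -> path r x p -> last x p = x ->
  exists2 c : seq T, (c != [::]) && uniq c & cycle r c.
Proof.
case: p => // y q _ /= /andP[rxy /shortenP[q' pathq' uniqq' _]] lastq'.
by exists (y :: q') => //=; rewrite rcons_path pathq' lastq' rxy.
Qed.

Section Matchings.
Variables (X Y : finType).
Implicit Types (E M : {set X * Y}).

Lemma matching_fst_inj M x y1 y2 :
  is_matching M -> (x, y1) \in M -> (x, y2) \in M -> y1 = y2.
Proof. by move=> hm h1 h2; have [] := hm _ _ h1 h2 (or_introl erefl). Qed.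

Lemma matching_snd_inj M x1 x2 y :
  is_matching M -> (x1, y) \in M -> (x2, y) \in M -> x1 = x2.
Proof. by move=> hm h1 h2; have [] := hm _ _ h1 h2 (or_intror erefl). Qed.

Lemma satXP M x : reflect (exists y, (x, y) \in M) (x \in satX M).
Proof. by rewrite inE; apply: existsP. Qed.

Lemma satYP M y : reflect (exists x, (x, y) \in M) (y \in satY M).
Proof. by rewrite inE; apply: existsP. Qed.

Lemma card_satX M : is_matching M -> #|satX M| = #|M|.
Proof.
move=> hm; have -> : satX M = [set e.1 | e in M].
  apply/setP=> x; apply/satXP/imsetP => [[y xyM]|[[x' y] xyM ->]].
    by exists (x, y).
  by exists y.
by apply: card_in_imset => e1 e2 h1 h2 he; apply: hm => //; left.
Qed.

Lemma card_satY M : is_matching M -> #|satY M| = #|M|.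
Proof.
move=> hm; have -> : satY M = [set e.2 | e in M].
  apply/setP=> y; apply/satYP/imsetP => [[x xyM]|[[x y'] xyM ->]].
    by exists (x, y).
  by exists x.
by apply: card_in_imset => e1 e2 h1 h2 he; apply: hm => //; right.
Qed.

Lemma perfect_matching_iff_card E M : is_matching_of E M ->
  perfect_matching E M <-> 2 * #|BD_vertices M| = #|X| + #|Y|.
Proof.
move=> [sME hm]; rewrite /BD_vertices.
have cX := card_satX hm; have cY := card_satY hm.
have leX : #|satX M| <= #|X| by apply: max_card.
have leY : #|satY M| <= #|Y| by apply: max_card.
split=> [[_ [sX sY]]|hcard]; first by move: cX cY; rewrite sX sY !cardsT; lia.
split; first by [].
by split; apply/eqP; rewrite eqEcard subsetT cardsT; lia.
Qed.

Lemma BD_arc_sat E M x1 x2 : BD_arc E M x1 x2 -> x1 \in satX M /\ x2 \in satX M.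
Proof. by case/and3P. Qed.

(* For uniq c, [next c] is a permutation of X that is the identity off c, so
   [switch_cycle c M] is M with each edge (next c x, y) moved to (x, y). *)
Definition switch_cycle (c : seq X) M : {set X * Y} :=
  [set e | (next c e.1, e.2) \in M].

Section SwitchCycle.
Variables (E M : {set X * Y}) (c : seq X).
Hypotheses (sME : M \subset E) (hm : is_matching M).
Hypotheses (uniq_c : uniq c) (cycle_c : cycle (BD_arc E M) c).

Lemma next_notin x : x \notin c -> next c x = x.
Proof. by rewrite next_nth => /negbTE->. Qed.

Lemma switch_cycle_edge x y : x \in c -> (next c x, y) \in M ->
  (x, y) \in E /\ (x, y) \notin M.
Proof.
move=> xc nxyM; case/and3P: (next_cycle cycle_c xc) => _ _.
case/existsP=> y' /and3P[nxy'M xy'E xy'M].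
by rewrite (matching_fst_inj hm nxyM nxy'M).
Qed.

Lemma mem_satX_next x : (next c x \in satX M) = (x \in satX M).
Proof.
have [xc|/next_notin-> //] := boolP (x \in c).
by have [-> ->] := BD_arc_sat (next_cycle cycle_c xc).
Qed.

Lemma switch_cycle_sub : switch_cycle c M \subset E.
Proof.
apply/subsetP=> [[x y]]; rewrite inE /=.
have [xc /(switch_cycle_edge xc)[]//|/next_notin->] := boolP (x \in c).
exact: (subsetP sME).
Qed.

Lemma switch_cycle_matching : is_matching (switch_cycle c M).
Proof.
have inj_next : injective (next c) := can_inj (prev_next uniq_c).
move=> [x1 y1] [x2 y2]; rewrite !inE /= => h1 h2 [ex|ey].
- by rewrite ex in h1 *; rewrite (matching_fst_inj hm h1 h2).
- by rewrite ey in h1 *; rewrite (inj_next _ _ (matching_snd_inj hm h1 h2)).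
Qed.

Lemma satX_switch_cycle : satX (switch_cycle c M) = satX M.
Proof.
apply/setP=> x; rewrite -mem_satX_next.
by apply/satXP/satXP => -[y xyM]; exists y; rewrite ?inE in xyM *.
Qed.

Lemma satY_switch_cycle : satY (switch_cycle c M) = satY M.
Proof.
apply/setP=> y; apply/satYP/satYP => -[x xyM].
  by exists (next c x); rewrite inE in xyM.
by exists (prev c x); rewrite inE /= next_prev.
Qed.

Lemma switch_cycle_induced :
  perfect_matching_induced E (satX M) (satY M) (switch_cycle c M).
Proof.
split; first by split; [exact: switch_cycle_sub|exact: switch_cycle_matching].
rewrite -satX_switch_cycle -satY_switch_cycle; split=> // -[x y] xyM'.
by split; [apply/satXP; exists y|apply/satYP; exists x].
Qed.

Lemma switch_cycle_neq x : x \in c -> switch_cycle c M != M.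
Proof.
move=> xc; have [_ /satXP[y nxyM]] := BD_arc_sat (next_cycle cycle_c xc).
have [_ xyM] := switch_cycle_edge xc nxyM.
by apply: contraNneq xyM => <-; rewrite inE.
Qed.

End SwitchCycle.

Definition rematched M M' : {set X} :=
  [set x | [exists y, ((x, y) \in M') && ((x, y) \notin M)]].

Section Rematched.
Variables (E M M' : {set X * Y}).
Hypotheses (hm : is_matching M) (hm' : is_matching M') (sM'E : M' \subset E).
Hypotheses (eqX : satX M' = satX M) (eqY : satY M' = satY M).

Lemma rematched_succ x : x \in rematched M M' ->
  exists2 x', x' \in rematched M M' & BD_arc E M x x'.
Proof.
rewrite inE => /existsP[y /andP[xyM' xyM]].
have /satYP[x' x'yM] : y \in satY M by rewrite -eqY; apply/satYP; exists x.
have /satXP[y' x'y'M'] : x' \in satX M' by rewrite eqX; apply/satXP; exists y.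
have x'y'M : (x', y') \notin M.
  apply/negP=> x'y'M; case/negP: xyM.
  rewrite (matching_fst_inj hm x'y'M x'yM) in x'y'M'.
  by rewrite (matching_snd_inj hm' xyM' x'y'M').
exists x'; first by rewrite inE; apply/existsP; exists y'; rewrite x'y'M' x'y'M.
rewrite /BD_arc /BD_vertices -eqX; apply/and3P; split.
- by apply/satXP; exists y.
- by apply/satXP; exists y'.
- by apply/existsP; exists y; rewrite x'yM (subsetP sM'E _ xyM') xyM.
Qed.

Lemma rematched_neq0 : M' != M -> exists x, x \in rematched M M'.
Proof.
move=> neqM'.
case: (pickP [pred e | (e \in M') != (e \in M)]) => [[x y] /= diff|same].
  case xyM': ((x, y) \in M') diff; case xyM: ((x, y) \in M) => // _.
    by exists x; rewrite inE; apply/existsP; exists y; rewrite xyM' xyM.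
  have /satXP[y' xy'M'] : x \in satX M' by rewrite eqX; apply/satXP; exists y.
  exists x; rewrite inE; apply/existsP; exists y'; rewrite xy'M'.
  apply: contraFN xyM' => xy'M.
  by rewrite -(matching_fst_inj hm xy'M xyM).
by case/eqP: neqM'; apply/setP => e; apply/eqP/negbFE/same.
Qed.

End Rematched.

Lemma uniquely_restricted_iff_acyclic E M : is_matching_of E M ->
  uniquely_restricted E M <-> acyclic_digraph (BD_arc E M).
Proof.
move=> [sME hm]; split=> [[_ unique_M] [x [p [p_nil [walk_p last_p]]]]|acyclic].
  have [c /andP[c_nil uniq_c] cycle_c] :=
    uniq_cycle_of_closed_walk p_nil walk_p last_p.
  case: c c_nil uniq_c cycle_c => // x0 c _ uniq_c cycle_c.
  have := switch_cycle_neq hm cycle_c (mem_head x0 c).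
  by rewrite (unique_M _ (switch_cycle_induced sME hm uniq_c cycle_c)) eqxx.
split=> // M' [[sM'E hm'] [_ [eqX eqY]]]; apply/eqP; apply: contraT => neqM'.
have [x0 x0_re] := rematched_neq0 hm eqX neqM'.
have succ_closed := rematched_succ hm hm' sM'E eqX eqY.
by case: (not_acyclic_of_succ_closed x0_re succ_closed acyclic).
Qed.

End Matchings.

Theorem theorem7 (X Y : finType) (E M : {set X * Y}) :
  is_matching_of E M ->
  ((perfect_matching E M /\ uniquely_restricted E M) <->
   (acyclic_digraph (BD_arc E M) /\
    2 * #|BD_vertices M| = #|X| + #|Y|)).
Proof.
move=> hEM; rewrite (perfect_matching_iff_card hEM).
rewrite (uniquely_restricted_iff_acyclic hEM).
by split=> -[].
Qed.
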